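(* Let $r\ge1$ and $z\in\mathbb{C}$, $z\ne0$. The algebra $\mathcal{P}'_r(z)$ is isomorphic to the algebra generated by elements $s_1,\dots,s_{r-1},p_1,\dots,p_r$ subject to the relations (a) $p_j^2=zp_j$, and $p_ip_j=p_jp_i$ for $i\ne j$; (b) $s_i^2=1$, $s_is_{i+1}s_i=s_{i+1}s_is_{i+1}$, and $s_is_j=s_js_i$ if $|i-j|>1$; (c) $s_ip_ip_{i+1}=p_ip_{i+1}s_i=p_ip_{i+1}$, $s_ip_is_i=p_{i+1}$, and $s_ip_j=p_js_i$ if $j\ne i,i+1$; the isomorphism sending $s_i$ to the permutation swapping $i$ and $i+1$, and $p_j$ to the identity map of $\{1,\dots,r\}\setminus\{j\}$.
   Context: A partial permutation of $\{1,\dots,r\}$ is a bijection $d:X\to Y$ between subsets $X=\mathrm{dom}(d)$, $Y=\mathrm{im}(d)$ of $\{1,\dots,r\}$; maps are written on the right and composed by $x(d_1\circ d_2)=(xd_1)d_2$. The algebra $\mathcal{P}'_r(z)$ has basis the set of partial permutations of $\{1,\dots,r\}$ and product $d_1d_2=z^{N}(d_1\circ d_2)$ where $N=r-|\mathrm{im}(d_1)\cup\mathrm{dom}(d_2)|$; equivalently, it is the subalgebra of the partition algebra $\mathcal{P}_r(z)$ spanned by the set-partition diagrams of $\{1,\dots,r,1',\dots,r'\}$ whose blocks have size $1$ or $2$, every $2$-block containing one element of $\{1,\dots,r\}$ and one of $\{1',\dots,r'\}$ (the block $\{i,j'\}$ corresponding to $i\mapsto j$). *)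

From HB Require Import structures.
From mathcomp Require Import all_boot all_order all_algebra.
From mathcomp Require Import complex.
From mathcomp Require Import reals.
Set Implicit Arguments. Unset Strict Implicit. Unset Printing Implicit Defensive.
Import Order.TTheory GRing.Theory Num.Theory.
Local Open Scope ring_scope.

(* The set {1,...,r} is represented 0-based by 'I_r (element k <-> k+1).
   A partial map of 'I_r is a finite function 'I_r -> option 'I_r
   (None = undefined); a partial permutation is an injective one. *)
Definition pmap r := {ffun 'I_r -> option 'I_r}.

Definition pinj r (f : pmap r) : bool :=
  [forall x, forall y, (f x != None) ==> (f x == f y) ==> (x == y)].

Definition pperm r := {f : pmap r | pinj f}.

(* composition written on the right: x (d1 o d2) = (x d1) d2 *)
Definition pcomp r (d1 d2 : pmap r) : pmap r :=
  [ffun x => obind d2 (d1 x)].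

Definition pN r (d1 d2 : pmap r) : nat :=
  r - #|[pred x : 'I_r | (Some x \in codom d1) || (d2 x != None)]|.

Section Palg.
Variable (C : nzRingType) (r : nat) (z : C).

(* elements of P'_r(z): coefficient vectors on the basis of partial perms *)
Definition Pel := {ffun pperm r -> C}.

Definition padd (x y : Pel) : Pel := [ffun d => x d + y d].
Definition pscale (a : C) (x : Pel) : Pel := [ffun d => a * x d].

(* bilinear extension of d1 d2 = z^N (d1 o d2) *)
Definition pmul (x y : Pel) : Pel :=
  [ffun d => \sum_(d1 : pperm r) \sum_(d2 : pperm r |
       pcomp (val d1) (val d2) == val d)
       x d1 * y d2 * z ^+ pN (val d1) (val d2)].

Definition pbasis (f : pmap r) : Pel := [ffun d => if val d == f then 1 else 0].

Definition pone : Pel := pbasis [ffun x => Some x].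

(* s_i (1 <= i <= r-1), 0-based index i with i.+1 < r: swaps i and i+1 *)
Definition sgen (i : nat) : Pel :=
  pbasis [ffun x : 'I_r => if (x : nat) == i then insub i.+1
                          else if (x : nat) == i.+1 then insub i else Some x].

(* p_j (1 <= j <= r), 0-based index j < r: identity of {1..r} \ {j} *)
Definition pgen (j : nat) : Pel :=
  pbasis [ffun x : 'I_r => if (x : nat) == j then None else Some x].
End Palg.

(* The defining relations (a),(b),(c), for a multiplication [mul],
   unit [one], and scaling-by-z map [zsc]; 0-based indices:
   s i for i.+1 < r, p j for j < r. *)
Local Open Scope nat_scope.
Definition pres_rels (T : Type) (mul : T -> T -> T) (one : T) (zsc : T -> T)
  (r : nat) (s p : nat -> T) : Prop :=
      (forall j, j < r -> mul (p j) (p j) = zsc (p j)) /\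
      (forall i j, i < r -> j < r -> i != j -> mul (p i) (p j) = mul (p j) (p i)) /\
      (forall i, i.+1 < r -> mul (s i) (s i) = one) /\
      (forall i, i.+2 < r ->
         mul (mul (s i) (s i.+1)) (s i) = mul (mul (s i.+1) (s i)) (s i.+1)) /\
      (forall i j, i.+1 < r -> j.+1 < r -> (i.+1 < j)%N || (j.+1 < i)%N ->
         mul (s i) (s j) = mul (s j) (s i)) /\
      (forall i, i.+1 < r ->
         mul (s i) (mul (p i) (p i.+1)) = mul (p i) (p i.+1) /\
         mul (mul (p i) (p i.+1)) (s i) = mul (p i) (p i.+1)) /\
      (forall i, i.+1 < r -> mul (mul (s i) (p i)) (s i) = p i.+1) /\
      (forall i j, i.+1 < r -> j < r -> j != i -> j != i.+1 ->
         mul (s i) (p j) = mul (p j) (s i)).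

Local Open Scope ring_scope.
Definition palg_morph (C : nzRingType) (r : nat) (z : C) (A : algType C)
  (f : Pel C r -> A) : Prop :=
  [/\ forall a x y, f (padd (pscale a x) y) = a *: f x + f y,
      forall x y, f (pmul z x y) = f x * f y &
      f (pone C r) = 1].

From Pilot Require Import Defs.
From HB Require Import structures.
From mathcomp Require Import all_boot all_order all_algebra all_fingroup.
From mathcomp Require Import complex reals zify.
Set Implicit Arguments. Unset Strict Implicit. Unset Printing Implicit Defensive.
Import Order.TTheory GRing.Theory Num.Theory.

(* The relations (b) are the Coxeter relations of type A, so [s_i] extends to a
   monoid morphism [cox] from the symmetric group: send a permutation to the product
   of the [s]'s along a normal-form word of descending cycles, and check that
   multiplying by an adjacent transposition on the right multiplies the image by
   the corresponding [s_i].
   A partial permutation is the identity of its domain [X] followed by a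
   permutation [q] extending it; it is sent to the product of the [p_j], [j] not in
   [X], times [cox q].  This does not depend on [q]: by (c), [p_a p_b] absorbs the
   transposition of [a] and [b] (conjugate [p_0 p_1 s_0 = p_0 p_1]), so [X]'s
   partial identity absorbs every permutation fixing [X].  Since [cox q] permutes the
   [p_j] by conjugation and [p_j^2 = z p_j], the images multiply like the basis,
   [z^N] included.  Uniqueness holds because every basis element is a product of
   generators. *)

Ltac nat_cases := repeat match goal with
 | |- context [?a == ?b] =>
     lazymatch a with context [if _ then _ else _] => fail | _ =>
     lazymatch b with context [if _ then _ else _] => fail | _ =>
     case: (a =P b) => /= ? end end
 end; try done; lia.

Lemma setCU1_setCC1_eq0 (T : finType) (x : T) (X : {set T}) :
  ~: (x |: X) :&: ~: [set~ x] = set0.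
Proof. by apply/setP => y; rewrite !inE; case: (y =P x); rewrite ?andbF. Qed.

Lemma preimset_perm1 (T : finType) (Y : {set T}) : (1%g : {perm T}) @^-1: Y = Y.
Proof. by apply/setP => x; rewrite inE perm1. Qed.

Lemma card_moved_mul_tperm (T : finType) (q : {perm T}) a : q a != a ->
  #|[set x | (q * tperm a (q a))%g x != x]| < #|[set x | q x != x]|.
Proof.
move=> moved_a; apply: proper_card; apply/properP; split.
  apply/subsetP => x; rewrite !inE permM; apply: contra => /eqP qx.
  rewrite qx tpermD //; first by apply: contraNneq moved_a => ->; rewrite qx.
  by apply: contraNneq moved_a => qa_x; move: qx; rewrite -qa_x => /perm_inj ->.
by exists a; rewrite !inE ?permM ?tpermR ?eqxx.
Qed.

Section CommutingProducts.
Variable R : pzSemiRingType.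
Local Open Scope ring_scope.

Lemma prodr_perm_comm (I : eqType) (l1 l2 : seq I) (F : I -> R) :
  (forall i j, GRing.comm (F i) (F j)) -> perm_eq l1 l2 ->
  \prod_(i <- l1) F i = \prod_(i <- l2) F i.
Proof.
move=> F_comm; elim: l1 l2 => [|a l1 IHl] l2 eq_l.
  by move: eq_l; rewrite perm_sym => /perm_nilP ->.
have l2_a : a \in l2 by rewrite -(perm_mem eq_l) mem_head.
move: eq_l; case/splitPr: l2_a => l l' eq_l.
rewrite big_cons big_cat big_cons /= mulrA.
rewrite -[_ * F a]commr_prod => [|i _]; last exact/commr_sym/F_comm.
rewrite -mulrA -big_cat; congr (_ * _); apply: IHl.
by rewrite -(perm_cons a); apply: perm_trans eq_l _; rewrite (perm_catCA l [:: a] l').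
Qed.

Lemma intertwine_prodr (I : Type) (l : seq I) (F G : I -> R) (x : R) :
  (forall i, x * F i = G i * x) -> x * \prod_(i <- l) F i = \prod_(i <- l) G i * x.
Proof.
move=> FG; elim: l => [|a l IHl]; first by rewrite !big_nil mulr1 mul1r.
by rewrite !big_cons mulrA FG -mulrA IHl mulrA.
Qed.

End CommutingProducts.

Section CoxeterWords.
Variables (T : Type) (one : T) (mul : Monoid.law one) (n : nat) (s : nat -> T).
Local Notation "x * y" := (mul x y).
Local Notation word w := (\big[mul/one]_(m <- w) s m).
Let mulA : associative mul := Monoid.mulmA mul.

Hypothesis s_invol : forall i, i.+1 < n -> s i * s i = one.
Hypothesis s_braid : forall i, i.+2 < n -> s i * s i.+1 * s i = s i.+1 * s i * s i.+1.
Hypothesis s_far_comm : forall i j, i.+1 < n -> j.+1 < n -> (i.+1 < j) || (j.+1 < i) ->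
  s i * s j = s j * s i.

Definition desc_word j k : seq nat := rev (iota j k).

Lemma mem_desc_word m j k : (m \in desc_word j k) = (j <= m < j + k).
Proof. by rewrite mem_rev mem_iota. Qed.

Lemma desc_wordS j k : desc_word j k.+1 = rcons (desc_word j.+1 k) j.
Proof. by rewrite /desc_word rev_cons. Qed.

Lemma desc_word_addS j k : desc_word j k.+1 = (j + k) :: desc_word j k.
Proof. by rewrite /desc_word -addn1 iotaD rev_cat. Qed.

Lemma word_comm w i : i.+1 < n ->
  {in w, forall m, (m.+1 < n) && ((m.+1 < i) || (i.+1 < m))} ->
  word w * s i = s i * word w.
Proof.
move=> lt_i_n; elim: w => [|a w IHw] far_w; first by rewrite big_nil Monoid.mul1m Monoid.mulm1.
have /andP[lt_a_n far_a] := far_w a (mem_head _ _).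
rewrite big_cons -mulA IHw => [|m w_m]; last by apply: far_w; rewrite inE w_m orbT.
by rewrite !mulA s_far_comm // orbC.
Qed.

Lemma desc_word_comm i j k : i.+1 < j -> j + k < n ->
  word (desc_word j k) * s i = s i * word (desc_word j k).
Proof.
move=> lt_i_j lt_jk_n; apply: word_comm => [|m]; first lia.
by rewrite mem_desc_word => /andP[? ?]; apply/andP; split; lia.
Qed.

Lemma word_desc_wordS j k :
  word (desc_word j k.+1) = word (desc_word j.+1 k) * s j.
Proof. by rewrite desc_wordS big_rcons. Qed.

Lemma word_desc_word_mulr j k : j.+1 < n ->
  word (desc_word j k.+1) * s j = word (desc_word j.+1 k).
Proof. by move=> lt_j_n; rewrite word_desc_wordS -mulA s_invol // Monoid.mulm1. Qed.

Lemma word_desc_word_shift i j k : j < i < j + k -> j + k < n ->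
  word (desc_word j k) * s i = s i.-1 * word (desc_word j k).
Proof.
elim: k => [|k IHk] /andP[lt_j_i lt_i_jk] lt_jk_n; first lia.
rewrite desc_word_addS big_cons.
have [def_i|ne_i] := eqVneq i (j + k); last first.
  rewrite -mulA IHk; [|lia|lia]; rewrite !mulA s_far_comm //; lia.
case: k IHk def_i lt_i_jk lt_jk_n => [|k] _ def_i lt_i_jk lt_jk_n; first lia.
have def_i1 : i.-1 = j + k by lia.
rewrite desc_word_addS big_cons -def_i -def_i1 -!mulA.
have -> : word (desc_word j k) * s i = s i * word (desc_word j k).
  apply: word_comm => [|m]; first lia.
  by rewrite mem_desc_word => /andP[? ?]; apply/andP; split; lia.
have braid := s_braid (i := i.-1); rewrite (_ : i.-1.+1 = i) in braid; last lia.
by rewrite !mulA braid //; lia.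
Qed.

End CoxeterWords.

Section AdjacentTranspositions.
Variable r' : nat.
Local Notation r := r'.+1.
Local Open Scope group_scope.
Implicit Types (p : 'S_r) (x : 'I_r).

Lemma eq_inord x j : j < r -> (x == inord j) = (x == j :> nat).
Proof. by move=> lt_j_r; rewrite -(inj_eq val_inj) /= inordK. Qed.

Definition eltr i : 'S_r := if i.+1 < r then tperm (inord i) (inord i.+1) else 1.

Lemma eltrE i x : i.+1 < r ->
  eltr i x = (if x == i :> nat then i.+1 else if x == i.+1 :> nat then i else x) :> nat.
Proof.
move=> lt_i_r; rewrite /eltr lt_i_r.
have lt_i_r' : i < r by lia.
case: tpermP => [->|->|]; rewrite ?inordK ?eqxx //; first nat_cases.
by move=> /eqP; rewrite eq_inord // => /negPf -> /eqP; rewrite eq_inord // => /negPf ->.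
Qed.

Lemma eltr_out i : ~~ (i.+1 < r) -> eltr i = 1.
Proof. by rewrite /eltr => /negPf ->. Qed.

Lemma eltr_invol i : i.+1 < r -> eltr i * eltr i = 1.
Proof.
by move=> lt_i_r; apply/permP => x; apply/val_inj; rewrite /= permM perm1 !eltrE //; nat_cases.
Qed.

Lemma eltr_braid i : i.+2 < r -> eltr i * eltr i.+1 * eltr i = eltr i.+1 * eltr i * eltr i.+1.
Proof.
by move=> lt_i_r; apply/permP => x; apply/val_inj; rewrite /= !permM !eltrE //; nat_cases.
Qed.

Lemma eltr_far_comm i j : i.+1 < r -> j.+1 < r -> (i.+1 < j) || (j.+1 < i) ->
  eltr i * eltr j = eltr j * eltr i.
Proof.
move=> lt_i_r lt_j_r far_ij; apply/permP => x; apply/val_inj.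
by rewrite /= !permM !eltrE //; nat_cases.
Qed.

Lemma eltr_word_fix w x : {in w, forall m, m.+1 < x} -> (\prod_(m <- w) eltr m) x = x.
Proof.
elim: w => [|a w IHw] lt_w_x; first by rewrite big_nil perm1.
have lt_a_x := lt_w_x a (mem_head _ _).
have lt_a_r : a.+1 < r by have := ltn_ord x; lia.
rewrite big_cons permM (_ : eltr a x = x); last by apply/val_inj; rewrite /= eltrE //; nat_cases.
by rewrite IHw // => m w_m; apply: lt_w_x; rewrite inE w_m orbT.
Qed.

Lemma desc_word_top j k : j + k < r ->
  (\prod_(m <- desc_word j k) eltr m) (inord (j + k)) = j :> nat.
Proof.
elim: k => [|k IHk] lt_jk_r; first by rewrite big_nil perm1 inordK; lia.
rewrite desc_word_addS big_cons permM.
have -> : eltr (j + k) (inord (j + k.+1)) = inord (j + k).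
  by apply/val_inj; rewrite /= eltrE ?inordK //; nat_cases.
by rewrite IHk //; lia.
Qed.

Definition fixes_from n p := forall x, n <= x -> p x = x.

Lemma fixes_from_lt n p x : n <= r -> fixes_from n p -> x < n -> p x < n.
Proof.
move=> le_n_r fix_p lt_x_n; rewrite ltnNge; apply/negP => le_n_px.
have /(congr1 val) /= := perm_inj (fix_p _ le_n_px); lia.
Qed.

Definition top_cycle n p : 'S_r :=
  let j := p (inord n) in \prod_(m <- desc_word j (n - j)) eltr m.

(* A word for [p] when [p] fixes all points [>= n]: strip off the cycle
   [eltr (n-1) * ... * eltr j] carrying [n-1] to [j = p (n-1)]. *)
Fixpoint perm_word n p : seq nat :=
  if n is n'.+1 then
    let j := p (inord n') in perm_word n' (p * (top_cycle n' p)^-1) ++ desc_word j (n' - j)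
  else [::].

Lemma perm_wordS n p j : p (inord n) = j :> nat ->
  perm_word n.+1 p =
    perm_word n (p * (\prod_(m <- desc_word j (n - j)) eltr m)^-1) ++ desc_word j (n - j).
Proof. by move=> <-. Qed.

Lemma perm_word1 n : n <= r -> perm_word n 1 = [::].
Proof.
elim: n => [//|n IHn] lt_n_r.
by rewrite (@perm_wordS _ _ n) ?perm1 ?inordK ?subnn ?big_nil ?invg1 ?mulg1 ?IHn //; lia.
Qed.

Lemma top_cycle_top n p : n < r -> p (inord n) <= n -> top_cycle n p (inord n) = p (inord n).
Proof.
move=> lt_n_r le_pn_n; apply/val_inj; rewrite /= /top_cycle.
by have := @desc_word_top (p (inord n)) (n - p (inord n)); rewrite subnKC // => ->.
Qed.

Lemma top_cycle_fix n p x : n < x -> top_cycle n p x = x.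
Proof. by move=> lt_n_x; apply: eltr_word_fix => m; rewrite mem_desc_word; lia. Qed.

Lemma fixes_from_top_cycle n p : n < r -> fixes_from n.+1 p ->
  fixes_from n (p * (top_cycle n p)^-1).
Proof.
move=> lt_n_r fix_p x le_n_x; rewrite permM.
have lt_pn : p (inord n) < n.+1 by apply: fixes_from_lt; rewrite ?inordK.
case: (ltngtP n x) => [lt_n_x|lt_x_n|eq_n_x].
- by rewrite fix_p // -{1}(top_cycle_fix p lt_n_x) permK.
- lia.
- have -> : x = inord n by apply/val_inj; rewrite /= inordK.
  by rewrite -{1}top_cycle_top ?permK.
Qed.

Lemma perm_wordK n p : n <= r -> fixes_from n p -> \prod_(m <- perm_word n p) eltr m = p.
Proof.
elim: n p => [|n IHn] p le_n_r fix_p /=.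
  by rewrite big_nil; apply/permP => x; rewrite perm1 fix_p.
rewrite big_cat /= -/(top_cycle n p) IHn ?mulgKV //; first lia.
exact: fixes_from_top_cycle.
Qed.

Lemma fixes_from_r p : fixes_from r p.
Proof. by move=> x; rewrite leqNgt ltn_ord. Qed.

Lemma eltr_ind (P : 'S_r -> Prop) :
  P 1 -> (forall p i, i.+1 < r -> P p -> P (p * eltr i)) -> forall p, P p.
Proof.
move=> P1 P_eltr p; rewrite -(perm_wordK (leqnn r) (fixes_from_r p)).
elim/last_ind: (perm_word r p) => [|w i IHw]; first by rewrite big_nil.
rewrite big_rcons /=; have [lt_i_r|ge_i_r] := ltnP i.+1 r; first exact: P_eltr.
by rewrite eltr_out ?mulg1 // -leqNgt.
Qed.

End AdjacentTranspositions.

Section CoxeterMorphism.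
Variables (r' : nat) (T : Type) (one : T) (mul : Monoid.law one) (s : nat -> T).
Local Notation r := r'.+1.
Local Notation "x * y" := (mul x y).
Local Notation word w := (\big[mul/one]_(m <- w) s m).
Let mulA : associative mul := Monoid.mulmA mul.

Hypothesis s_invol : forall i, i.+1 < r -> s i * s i = one.
Hypothesis s_braid : forall i, i.+2 < r -> s i * s i.+1 * s i = s i.+1 * s i * s i.+1.
Hypothesis s_far_comm : forall i j, i.+1 < r -> j.+1 < r -> (i.+1 < j) || (j.+1 < i) ->
  s i * s j = s j * s i.

(* Write [p = p' c] with [c] the cycle carrying the top point to its image [j].
   When [i.+1 < j] or [j < i], [eltr i] commutes with [c] up to a shift of index;
   when [j] is [i] or [i.+1], [eltr i] is absorbed into the cycle. *)
Lemma perm_word_eltr n (p : 'S_r) i : n <= r -> fixes_from n p -> i.+1 < n ->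
  word (perm_word n (p * eltr r' i)%g) = word (perm_word n p) * s i.
Proof.
elim: n p i => [|n IHn] p i le_n_r fix_p lt_i_n; first lia.
set j := nat_of_ord (p (inord n)).
have lt_j_n : j < n.+1 by apply: fixes_from_lt => //; rewrite inordK.
have lt_i_r : i.+1 < r by lia.
set j' := if j == i then i.+1 else if j == i.+1 then i else j.
have pi_n : (p * eltr r' i)%g (inord n) = j' :> nat by rewrite permM eltrE.
set c := (\prod_(m <- desc_word j (n - j)) eltr r' m)%g.
have fix_pc : fixes_from n (p * c^-1)%g := fixes_from_top_cycle le_n_r fix_p.
rewrite (perm_wordS (erefl j)) -/c big_cat.
have far_case i' : i'.+1 < n -> j' = j -> (c * eltr r' i = eltr r' i' * c)%g ->
    word (desc_word j (n - j)) * s i = s i' * word (desc_word j (n - j)) ->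
    word (perm_word n.+1 (p * eltr r' i)%g) =
      word (perm_word n (p * c^-1)%g) * word (desc_word j (n - j)) * s i.
  move=> lt_i'_n j'_j c_i c_i'; rewrite j'_j in pi_n; rewrite (perm_wordS pi_n) -/c big_cat.
  have -> : (p * eltr r' i * c^-1 = p * c^-1 * eltr r' i')%g.
    have -> : eltr r' i' = (c * eltr r' i * c^-1)%g by rewrite c_i mulgK.
    by rewrite !mulgA mulgKV.
  by rewrite IHn //= -?mulA ?c_i' //; lia.
have [lt_i1_j|le_j_i1] := ltnP i.+1 j.
  apply: (far_case i).
  - lia.
  - by rewrite /j'; nat_cases.
  - by apply: (desc_word_comm (@eltr_far_comm r')); lia.
  - by apply: (desc_word_comm s_far_comm); lia.
have [def_j|ne_j_i1] := eqVneq j i.+1.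
  rewrite /j' def_j eqxx (_ : (i.+1 == i) = false) in pi_n; last lia.
  have def_ni : n - i = (n - i.+1).+1 by lia.
  rewrite (perm_wordS pi_n) big_cat /= def_ni (word_desc_wordS _ s) /c def_j.
  by rewrite (word_desc_wordS _ (eltr r')) invMg mulgA mulgK mulA.
have [def_j'|ne_j_i] := eqVneq j i.
  rewrite /j' def_j' eqxx in pi_n.
  have def_ni : n - i = (n - i.+1).+1 by lia.
  have c_i : (\prod_(m <- desc_word i.+1 (n - i.+1)) eltr r' m = c * eltr r' i)%g.
    by rewrite /c def_j' def_ni (word_desc_wordS _ (eltr r')) /= -mulgA eltr_invol // mulg1.
  rewrite (perm_wordS pi_n) big_cat /= c_i invMg mulgA mulgK -mulA.
  by rewrite /c def_j' def_ni (word_desc_word_mulr s_invol).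
apply: (far_case i.-1).
- lia.
- by rewrite /j'; nat_cases.
- by apply: (word_desc_word_shift (@eltr_braid r') (@eltr_far_comm r')); lia.
- by apply: (word_desc_word_shift s_braid s_far_comm); lia.
Qed.

Definition cox (p : 'S_r) : T := word (perm_word r p).

Lemma cox_eltr_r p i : i.+1 < r -> cox (p * eltr r' i)%g = cox p * s i.
Proof. by move=> lt_i_r; apply: perm_word_eltr => //; apply: fixes_from_r. Qed.

Lemma cox1 : cox 1%g = one.
Proof. by rewrite /cox perm_word1 ?big_nil. Qed.

Lemma coxM p q : cox (p * q)%g = cox p * cox q.
Proof.
elim/eltr_ind: q => [|q i lt_i_r IHq]; first by rewrite mulg1 cox1 Monoid.mulm1.
by rewrite mulgA !cox_eltr_r // IHq mulA.
Qed.

Lemma cox_eltr i : i.+1 < r -> cox (eltr r' i) = s i.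
Proof. by move=> lt_i_r; rewrite -(mul1g (eltr r' i)) cox_eltr_r // cox1 Monoid.mul1m. Qed.

End CoxeterMorphism.

(* [pmap] and [pcomp] are qualified: MathComp's [seq.pmap] and [ssrfun.pcomp] shadow them. *)
Section PartialMaps.
Variable r' : nat.
Local Notation r := r'.+1.
Implicit Types (m : Defs.pmap r) (q : 'S_r) (X Y : {set 'I_r}).

Definition pdom m : {set 'I_r} := [set x | m x != None].

Definition prestr X q : Defs.pmap r := [ffun x => if x \in X then Some (q x) else None].

Lemma pinjP m : reflect (forall x y, m x != None -> m x = m y -> x = y) (pinj m).
Proof.
apply: (iffP forallP) => [inj_m x y mx eq_mxy | inj_m x].
  by have /forallP/(_ y) := inj_m x; rewrite mx eq_mxy eqxx => /eqP.
by apply/forallP => y; apply/implyP => mx; apply/implyP => /eqP/(inj_m _ _ mx)->.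
Qed.

Lemma pdom_prestr X q : pdom (prestr X q) = X.
Proof. by apply/setP => x; rewrite inE ffunE; case: ifP. Qed.

Lemma pinj_prestr X q : pinj (prestr X q).
Proof.
apply/pinjP => x y; rewrite !ffunE.
by case: ifP => // _; case: ifP => // _ _ [/perm_inj].
Qed.

Lemma prestr_inj X q q' : prestr X q = prestr X q' -> {in X, q =1 q'}.
Proof. by move=> eq_qq' x X_x; move/ffunP/(_ x): eq_qq'; rewrite !ffunE X_x => -[]. Qed.

Lemma eq_prestr X Y q q' : X = Y -> {in X, q =1 q'} -> prestr X q = prestr Y q'.
Proof. by move=> <- eq_qq'; apply/ffunP => x; rewrite !ffunE; case: ifP => // /eq_qq' ->. Qed.

Lemma pcomp_prestr X Y q q' :
  Defs.pcomp (prestr X q) (prestr Y q') = prestr (X :&: q @^-1: Y) (q * q')%g.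
Proof.
apply/ffunP => x; rewrite !ffunE !inE permM.
by case: (x \in X) => //=; rewrite ffunE; case: ifP.
Qed.

Lemma pN_prestr X Y q q' :
  pN (prestr X q) (prestr Y q') = #|~: X :&: ~: (q @^-1: Y)|.
Proof.
set B := [set x | (q^-1)%g x \in X] :|: Y.
have -> : pN (prestr X q) (prestr Y q') = #|~: B|.
  rewrite /pN -[#|~: B|](addKn #|B|) cardsC card_ord; congr (_ - _).
  apply: eq_card => x; rewrite !inE ffunE; congr (_ || _); last by case: ifP.
  apply/codomP/idP => [[y]|X_qx]; first by rewrite ffunE; case: ifP => // X_y [->]; rewrite permK.
  by exists ((q^-1)%g x); rewrite ffunE X_qx permKV.
rewrite -(card_preimset _ (@perm_inj _ q)); apply: eq_card => x.
by rewrite !inE permK negb_or.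
Qed.

Lemma pinj_pcomp m1 m2 : pinj m1 -> pinj m2 -> pinj (Defs.pcomp m1 m2).
Proof.
move=> /pinjP inj1 /pinjP inj2; apply/pinjP => x y; rewrite !ffunE.
case m1x: (m1 x) => [u|] //=.
case m1y: (m1 y) => [v|] //= m2u; last by move=> eq_m2; rewrite eq_m2 in m2u.
by move=> /(inj2 _ _ m2u) eq_uv; apply: inj1; rewrite ?m1x ?m1y ?eq_uv.
Qed.

Lemma pinj_total_perm m : pinj m -> pdom m = setT -> exists q, m = prestr setT q.
Proof.
move=> /pinjP inj_m dom_m.
have m_some x : m x != None by have := in_setT x; rewrite -dom_m inE.
pose f x := odflt x (m x).
have m_f x : m x = Some (f x) by rewrite /f; case: (m x) (m_some x).
have f_inj : injective f by move=> x y eq_f; apply: inj_m (m_some x) _; rewrite !m_f eq_f.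
by exists (perm f_inj); apply/ffunP => x; rewrite ffunE inE permE m_f.
Qed.

(* Send [x0] to a point outside the image of [m]. *)
Lemma pinj_extend_point m x0 : pinj m -> x0 \notin pdom m ->
  exists2 m' : Defs.pmap r, pinj m' & pdom m' = x0 |: pdom m /\ {in pdom m, m' =1 m}.
Proof.
move=> inj_m x0_out.
pose g x := odflt x (m x).
have g_inj : {in pdom m &, injective g}.
  move=> x y; rewrite !inE /g => mx my; case ex: (m x) mx => [u|] // _.
  case ey: (m y) my => [v|] // _ /= eq_uv; apply: (pinjP _ inj_m); rewrite ?ex ?ey ?eq_uv //.
have [y0 y0_out] : exists y0, y0 \notin g @: pdom m.
  apply/existsP; rewrite -negb_forall; apply/negP => /forallP all_im.
  have /proper_card : pdom m \proper [set: 'I_r].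
    by apply/properP; split; [exact: subsetT | exists x0; rewrite ?in_setT].
  rewrite -(card_in_imset g_inj) ltnNge => /negP; apply.
  by apply/subset_leq_card/subsetP => y _; apply: all_im.
have m_y0 x : m x != Some y0.
  by apply: contraNneq y0_out => mx; apply/imsetP; exists x; rewrite ?inE /g mx.
pose m' : Defs.pmap r := [ffun x => if x == x0 then Some y0 else m x].
exists m'.
  apply/pinjP => x y; rewrite !ffunE.
  case: (x =P x0) => [->|_]; case: (y =P x0) => [->|_] //.
  - by move=> _ eq_m; have := m_y0 y; rewrite -eq_m eqxx.
  - by move=> _ eq_m; have := m_y0 x; rewrite eq_m eqxx.
  - exact: (pinjP _ inj_m).
split; first by apply/setP => x; rewrite !inE ffunE; case: (x =P x0).
by move=> x dom_x; rewrite ffunE; case: eqP => // eq_x; rewrite -eq_x dom_x in x0_out.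
Qed.

Lemma prestr_pdom m : pinj m -> exists q, m = prestr (pdom m) q.
Proof.
have [k] := ubnP #|~: pdom m|; elim: k m => // k IHk m lt_m_k inj_m.
have [dom_full|[x0 x0_out]] := set_0Vmem (~: pdom m).
  have /pinj_total_perm[//|q def_m] : pdom m = setT by rewrite -[pdom m]setCK dom_full setC0.
  by exists q; rewrite def_m pdom_prestr.
have x0_nin : x0 \notin pdom m by rewrite -in_setC.
have [m' inj_m' [dom_m' eq_m'm]] := pinj_extend_point inj_m x0_nin.
have [|q def_m'] := IHk m' _ inj_m'.
  have -> : ~: pdom m' = ~: pdom m :\ x0 by rewrite dom_m' setCU setIC setDE.
  by move: lt_m_k; rewrite (cardsD1 x0) x0_out add1n ltnS.
exists q; apply/ffunP => x; rewrite ffunE.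
case: ifP => [dom_x|/negbT]; last by rewrite inE negbK => /eqP.
by rewrite -eq_m'm // def_m' ffunE dom_m' inE dom_x orbT.
Qed.

End PartialMaps.

Section PartialPermAlgebra.
Variables (r' : nat) (K : comNzRingType) (z : K).
Local Notation r := r'.+1.
Local Notation pb := (pbasis K).
Local Notation pmulz := (@pmul K r z).
Implicit Types (q : 'S_r) (X Y : {set 'I_r}) (m : Defs.pmap r).

Lemma pscale1 (x : Pel K r) : pscale 1%R x = x.
Proof. by apply/ffunP => d; rewrite ffunE mul1r. Qed.

Lemma pbasisM m1 m2 : pinj m1 -> pinj m2 ->
  pmulz (pb m1) (pb m2) = pscale (z ^+ pN m1 m2)%R (pb (Defs.pcomp m1 m2)).
Proof.
move=> inj1 inj2; apply/ffunP => d; rewrite !ffunE.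
pose d1 : pperm r := exist _ m1 inj1; pose d2 : pperm r := exist _ m2 inj2.
rewrite (bigD1 d1) //= [X in (_ + X)%R]big1 ?addr0 => [|e1 ne_e1]; last first.
  apply: big1 => e2 _; rewrite ffunE; case: eqP => [eq_e1|_]; last by rewrite !mul0r.
  by case/eqP: ne_e1; apply: val_inj.
rewrite big_mkcond (bigD1 d2) //= [X in (_ + X)%R]big1 ?addr0 => [|e2 ne_e2]; last first.
  rewrite !ffunE /=; case: ifP => // _.
  case: (val e2 =P m2) => [eq_e2|_]; last by rewrite mulr0 mul0r.
  by case/eqP: ne_e2; apply: val_inj.
by rewrite !ffunE /= !eqxx !mul1r eq_sym; case: ifP; rewrite ?mulr1 ?mulr0.
Qed.

Lemma pbasis_prestrM X Y q q' :
  pmulz (pb (prestr X q)) (pb (prestr Y q')) =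
  pscale (z ^+ #|~: X :&: ~: (q @^-1: Y)|)%R (pb (prestr (X :&: q @^-1: Y) (q * q')%g)).
Proof. by rewrite pbasisM ?pinj_prestr // pN_prestr pcomp_prestr. Qed.

Lemma pbasis_permMl Y q q' :
  pmulz (pb (prestr setT q)) (pb (prestr Y q')) = pb (prestr (q @^-1: Y) (q * q')%g).
Proof. by rewrite pbasis_prestrM setCT set0I cards0 expr0 pscale1 setTI. Qed.

Lemma pbasis_permMr X q q' :
  pmulz (pb (prestr X q)) (pb (prestr setT q')) = pb (prestr X (q * q')%g).
Proof. by rewrite pbasis_prestrM preimsetT setCT setI0 cards0 expr0 pscale1 setIT. Qed.

Lemma poneE : pone K r = pb (prestr setT 1%g).
Proof. by congr (pb _); apply/ffunP => x; rewrite !ffunE inE perm1. Qed.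

Lemma sgenE i : i.+1 < r -> sgen K r i = pb (prestr setT (eltr r' i)).
Proof.
move=> lt_i_r; congr (pb _); apply/ffunP => x; rewrite !ffunE inE.
have lt_i_r' : i < r by apply: ltnW.
case: eqP => [x_i|ne_i]; last case: eqP => [x_i1|ne_i1]; rewrite ?insubT; congr Some;
  by apply: val_inj; rewrite /= eltrE //; nat_cases.
Qed.

Lemma pgenE j : j < r -> pgen K r j = pb (prestr [set~ inord j] 1%g).
Proof.
move=> lt_j_r; congr (pb _); apply/ffunP => x; rewrite !ffunE !inE eq_inord //.
by case: eqP; rewrite /= ?perm1.
Qed.

Lemma pgen_pbasis (j : 'I_r) X : j \notin X ->
  pmulz (pb (prestr (j |: X) 1%g)) (pgen K r j) = pb (prestr X 1%g).
Proof.
move=> X'j; rewrite pgenE // inord_val pbasis_prestrM preimset_perm1 mulg1.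
by rewrite setCU1_setCC1_eq0 -setDE setU1K // cards0 expr0 pscale1.
Qed.

Lemma pgen_idem j : j < r -> pmulz (pgen K r j) (pgen K r j) = pscale z (pgen K r j).
Proof.
move=> lt_j_r; rewrite pgenE // pbasis_prestrM preimset_perm1 setIid mulg1 !setCK.
by rewrite setIid cards1 expr1.
Qed.

Lemma pgen_comm i j : i < r -> j < r -> i != j ->
  pmulz (pgen K r i) (pgen K r j) = pmulz (pgen K r j) (pgen K r i).
Proof.
move=> lt_i_r lt_j_r _; rewrite !pgenE // !pbasis_prestrM !preimset_perm1 !mulg1.
by congr (pscale (z ^+ #|_|)%R (pb (prestr _ _))); rewrite setIC.
Qed.

Lemma sgen_invol i : i.+1 < r -> pmulz (sgen K r i) (sgen K r i) = pone K r.
Proof. by move=> lt_i_r; rewrite sgenE // pbasis_permMl preimsetT eltr_invol // poneE. Qed.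

Lemma sgen_braid i : i.+2 < r ->
  pmulz (pmulz (sgen K r i) (sgen K r i.+1)) (sgen K r i) =
  pmulz (pmulz (sgen K r i.+1) (sgen K r i)) (sgen K r i.+1).
Proof.
move=> lt_i2_r; have lt_i_r : i.+1 < r by apply: ltnW.
by rewrite !sgenE // !pbasis_permMl !preimsetT !pbasis_permMl !preimsetT eltr_braid.
Qed.

Lemma sgen_far_comm i j : i.+1 < r -> j.+1 < r -> (i.+1 < j) || (j.+1 < i) ->
  pmulz (sgen K r i) (sgen K r j) = pmulz (sgen K r j) (sgen K r i).
Proof.
by move=> lt_i_r lt_j_r far_ij; rewrite !sgenE // !pbasis_permMl !preimsetT eltr_far_comm.
Qed.

Lemma pgen_pair i : i.+1 < r -> pmulz (pgen K r i) (pgen K r i.+1) =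
  pb (prestr ([set~ inord i] :&: [set~ inord i.+1]) 1%g).
Proof.
move=> lt_i_r; have lt_i : i < r := ltnW lt_i_r.
rewrite !pgenE // pbasis_prestrM preimset_perm1 mulg1 !setCK.
have -> : [set inord i] :&: [set inord i.+1] = set0 :> {set 'I_r}.
  by apply/setP => x; rewrite !inE !eq_inord //; nat_cases.
by rewrite cards0 expr0 pscale1.
Qed.

Lemma sgen_pgen_pair i : i.+1 < r ->
  pmulz (sgen K r i) (pmulz (pgen K r i) (pgen K r i.+1)) = pmulz (pgen K r i) (pgen K r i.+1) /\
  pmulz (pmulz (pgen K r i) (pgen K r i.+1)) (sgen K r i) = pmulz (pgen K r i) (pgen K r i.+1).
Proof.
move=> lt_i_r; have lt_i : i < r := ltnW lt_i_r.
rewrite pgen_pair // sgenE // pbasis_permMl pbasis_permMr.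
set D := _ :&: _; have fixD : {in D, forall x, eltr r' i x = x}.
  move=> x; rewrite !inE !eq_inord // => D_x; apply/val_inj.
  by rewrite /= eltrE //; move: D_x; nat_cases.
have -> : eltr r' i @^-1: D = D.
  by apply/setP => x; rewrite !inE !eq_inord // eltrE //; nat_cases.
by split; congr (pb _); apply: eq_prestr => // x D_x; rewrite permM !perm1 fixD.
Qed.

Lemma sgen_conj_pgen i : i.+1 < r ->
  pmulz (pmulz (sgen K r i) (pgen K r i)) (sgen K r i) = pgen K r i.+1.
Proof.
move=> lt_i_r; have lt_i : i < r := ltnW lt_i_r.
rewrite !pgenE // sgenE // pbasis_permMl pbasis_permMr mulg1 eltr_invol //.
congr (pb _); apply: eq_prestr => //.
by apply/setP => x; rewrite !inE !eq_inord // eltrE //; nat_cases.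
Qed.

Lemma sgen_pgen_comm i j : i.+1 < r -> j < r -> j != i -> j != i.+1 ->
  pmulz (sgen K r i) (pgen K r j) = pmulz (pgen K r j) (sgen K r i).
Proof.
move=> lt_i_r lt_j_r ne_ji ne_ji1.
rewrite pgenE // sgenE // pbasis_permMl pbasis_permMr mulg1 mul1g.
congr (pb _); apply: eq_prestr => //.
by apply/setP => x; rewrite !inE !eq_inord // eltrE //; move: ne_ji ne_ji1; nat_cases.
Qed.

Lemma pres_rels_palg : pres_rels pmulz (pone K r) (pscale z) r (sgen K r) (pgen K r).
Proof.
split; first exact: pgen_idem.
split; first exact: pgen_comm.
split; first exact: sgen_invol.
split; first exact: sgen_braid.
split; first exact: sgen_far_comm.
split; first exact: sgen_pgen_pair.
split; [exact: sgen_conj_pgen | exact: sgen_pgen_comm].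
Qed.

Lemma palg_linear_decomp (A : lmodType K) (h : Pel K r -> A) :
  (forall a x y, h (padd (pscale a x) y) = a *: h x + h y)%R ->
  forall x, h x = (\sum_(d : pperm r) x d *: h (pb (val d)))%R.
Proof.
move=> h_lin x; pose x0 : Pel K r := [ffun=> 0%R].
have h0 : h x0 = 0%R.
  have := h_lin 1%R x0 x0; rewrite scale1r (_ : padd _ _ = x0) => [h_x0|]; last first.
    by apply/ffunP => d; rewrite !ffunE mulr0 addr0.
  by apply: (addrI (h x0)); rewrite addr0 -h_x0.
pose restr (l : seq (pperm r)) : Pel K r := [ffun d => if d \in l then x d else 0%R].
have h_restr l : uniq l -> h (restr l) = (\sum_(d <- l) x d *: h (pb (val d)))%R.
  elim: l => [_|d l IHl /= /andP[l'd uniq_l]].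
    by rewrite big_nil -h0; congr h; apply/ffunP => d; rewrite !ffunE.
  rewrite big_cons -IHl // -h_lin; congr h; apply/ffunP => e; rewrite !ffunE inE.
  have [->|ne_ed] := eqVneq e d; first by rewrite eqxx mulr1 (negPf l'd) addr0.
  by rewrite (inj_eq val_inj) (negPf ne_ed) mulr0 add0r.
rewrite -h_restr ?index_enum_uniq //; congr h.
by apply/ffunP => d; rewrite ffunE mem_index_enum.
Qed.

End PartialPermAlgebra.

Section MorphismUniqueness.
Variables (r' : nat) (K : comNzRingType) (z : K) (A : algType K) (g1 g2 : Pel K r'.+1 -> A).
Local Notation r := r'.+1.
Local Notation pb := (pbasis K).
Implicit Types (q : 'S_r) (X : {set 'I_r}).

Hypotheses (morph_g1 : palg_morph z g1) (morph_g2 : palg_morph z g2).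
Hypothesis eq_g_sgen : forall i, i.+1 < r -> g1 (sgen K r i) = g2 (sgen K r i).
Hypothesis eq_g_pgen : forall j, j < r -> g1 (pgen K r j) = g2 (pgen K r j).

Let eq_g_mul u v : g1 u = g2 u -> g1 v = g2 v -> g1 (pmul z u v) = g2 (pmul z u v).
Proof. by case: morph_g1 morph_g2 => [_ g1M _] [_ g2M _] eq_u eq_v; rewrite g1M g2M eq_u eq_v. Qed.

Lemma morph_eq_perm q : g1 (pb (prestr setT q)) = g2 (pb (prestr setT q)).
Proof.
elim/eltr_ind: q => [|q i lt_i_r IHq].
  by case: morph_g1 morph_g2 => [_ _ g1_1] [_ _ g2_1]; rewrite -poneE g1_1 g2_1.
have -> : pb (prestr setT (q * eltr r' i)%g) = pmul z (pb (prestr setT q)) (sgen K r i).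
  by rewrite sgenE // pbasis_permMl preimsetT.
by rewrite eq_g_mul // eq_g_sgen.
Qed.

Lemma morph_eq_pid X : g1 (pb (prestr X 1%g)) = g2 (pb (prestr X 1%g)).
Proof.
have [k] := ubnP #|~: X|; elim: k X => // k IHk X lt_X_k.
have [X_full|[j X'j]] := set_0Vmem (~: X).
  by rewrite -[X]setCK X_full setC0 morph_eq_perm.
rewrite inE in X'j; rewrite -(pgen_pbasis z X'j) eq_g_mul ?eq_g_pgen //.
apply: IHk; move: lt_X_k; rewrite (cardsD1 j) inE X'j add1n ltnS.
by rewrite setCU setIC -setDE.
Qed.

Lemma morph_eq_pinj m : pinj m -> g1 (pb m) = g2 (pb m).
Proof.
move=> /prestr_pdom[q ->]; rewrite -(mul1g q) -(pbasis_permMr z).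
by apply: eq_g_mul; [apply: morph_eq_pid | apply: morph_eq_perm].
Qed.

Lemma palg_morph_eq x : g1 x = g2 x.
Proof.
case: morph_g1 morph_g2 => [g1_lin _ _] [g2_lin _ _].
rewrite (palg_linear_decomp g1_lin) (palg_linear_decomp g2_lin).
by apply: eq_bigr => d _; rewrite morph_eq_pinj // (valP d).
Qed.

End MorphismUniqueness.

Section RelationsModel.
Variables (r' : nat) (K : comNzRingType) (z : K) (A : algType K) (s p : nat -> A).
Local Notation r := r'.+1.
Implicit Types (q : 'S_r) (X Y : {set 'I_r}).
Local Open Scope ring_scope.

Hypothesis p_idem : forall j, (j < r)%N -> p j * p j = z *: p j.
Hypothesis p_comm : forall i j, (i < r)%N -> (j < r)%N -> i != j -> p i * p j = p j * p i.
Hypothesis s_invol : forall i, (i.+1 < r)%N -> s i * s i = 1.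
Hypothesis s_braid : forall i, (i.+2 < r)%N -> s i * s i.+1 * s i = s i.+1 * s i * s i.+1.
Hypothesis s_far_comm : forall i j, (i.+1 < r)%N -> (j.+1 < r)%N -> ((i.+1 < j) || (j.+1 < i))%N ->
  s i * s j = s j * s i.
Hypothesis pp_s : forall i, (i.+1 < r)%N -> p i * p i.+1 * s i = p i * p i.+1.
Hypothesis s_conj_p : forall i, (i.+1 < r)%N -> s i * p i * s i = p i.+1.
Hypothesis s_p_comm : forall i j, (i.+1 < r)%N -> (j < r)%N -> j != i -> j != i.+1 ->
  s i * p j = p j * s i.

Local Notation S := (@cox r' _ _ (Monoid.Law.clone _ _ *%R _) s).
Let S_mul : {morph S : q q' / (q * q')%g >-> q * q'} := coxM s_invol s_braid s_far_comm.
Let S1 : S 1%g = 1. Proof. exact: cox1. Qed.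
Let S_eltr_r q i : (i.+1 < r)%N -> S (q * eltr r' i)%g = S q * s i.
Proof. exact: cox_eltr_r. Qed.
Let S_mulV q : S (q^-1)%g * S q = 1.
Proof. by rewrite -S_mul mulVg. Qed.

Lemma p_mul_s (x : 'I_r) i : (i.+1 < r)%N -> p x * s i = s i * p (eltr r' i x).
Proof.
move=> lt_i_r; rewrite eltrE //.
case: eqP => [->|ne_i]; first by rewrite -s_conj_p // !mulrA s_invol // mul1r.
case: eqP => [->|ne_i1]; first by rewrite -s_conj_p // -!mulrA s_invol // mulr1.
by rewrite s_p_comm //; apply/eqP.
Qed.

Lemma p_mul_cox (x : 'I_r) q : p x * S q = S q * p (q x).
Proof.
elim/eltr_ind: q x => [|q i lt_i_r IHq] x; first by rewrite S1 mul1r mulr1 perm1.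
by rewrite S_eltr_r // mulrA IHq -mulrA p_mul_s // mulrA permM.
Qed.

Definition pid X := \prod_(j : 'I_r) (if j \in X then 1 else p j).

Let pid_factor_comm X Y (i j : 'I_r) :
  GRing.comm (if i \in X then 1 else p i) (if j \in Y then 1 else p j).
Proof.
rewrite /GRing.comm; case: (i \in X); case: (j \in Y); rewrite ?mul1r ?mulr1 //.
by have [->//|ne_ij] := eqVneq i j; rewrite p_comm // (inj_eq val_inj).
Qed.

Lemma pidT : pid setT = 1.
Proof. by apply: big1 => j _; rewrite inE. Qed.

Lemma pid_setC1 (j : 'I_r) : pid [set~ j] = p j.
Proof.
rewrite /pid (eq_bigr (fun i => if i == j then p i else 1)) => [|i _]; last first.
  by rewrite in_setC1 if_neg.
by rewrite -big_mkcond big_pred1_eq.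
Qed.

Lemma pidM X Y : pid X * pid Y = z ^+ #|~: X :&: ~: Y| *: pid (X :&: Y).
Proof.
rewrite /pid -prodrM_comm => [|i j _ _]; last exact: pid_factor_comm.
rewrite (eq_bigr (fun j =>
  (if j \in ~: X :&: ~: Y then z else 1) *: (if j \in X :&: Y then 1 else p j))).
  by rewrite scaler_prod -big_mkcond prodr_const.
move=> j _; rewrite !inE.
by case: (j \in X); case: (j \in Y); rewrite /= ?mulr1 ?mul1r ?scale1r ?p_idem.
Qed.

Lemma pid_setU1 (x : 'I_r) X : x \notin X -> pid (x |: X) * p x = pid X.
Proof.
move=> X'x; rewrite -pid_setC1 pidM.
by rewrite setCU1_setCC1_eq0 -setDE setU1K // cards0 scale1r.
Qed.

Lemma cox_mul_pid q Y : S q * pid Y = pid (q @^-1: Y) * S q.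
Proof.
rewrite /pid (@intertwine_prodr _ _ _ _ (fun k => if k \in Y then 1 else p ((q^-1)%g k)));
  last first.
  by move=> k; case: (k \in Y); rewrite ?mul1r ?mulr1 // p_mul_cox permKV.
congr (_ * _).
rewrite (eq_bigr (fun k => if (q^-1)%g k \in q @^-1: Y then 1 else p ((q^-1)%g k))); last first.
  by move=> k _; rewrite inE permKV.
rewrite -(big_map (q^-1)%g xpredT (fun k => if k \in q @^-1: Y then 1 else p k)).
apply: prodr_perm_comm => [i j|]; first exact: pid_factor_comm.
apply: uniq_perm; rewrite ?map_inj_uniq ?index_enum_uniq //; first exact: perm_inj.
by move=> x; rewrite mem_index_enum; apply/mapP; exists (q x); rewrite ?mem_index_enum ?permK.
Qed.

Let S_eltr i : (i.+1 < r)%N -> S (eltr r' i) = s i.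
Proof. exact: cox_eltr. Qed.

(* Conjugating relation (c) for [i = 0] by a permutation sending [0, 1] to [a, b]. *)
Lemma pp_tperm (a b : 'I_r) : a != b -> p a * p b * S (tperm a b) = p a * p b.
Proof.
move=> ne_ab; have lt_1_r : (1 < r)%N.
  rewrite ltnNge; apply: contra ne_ab => le_r_1; apply/eqP/val_inj => /=.
  by have := ltn_ord a; have := ltn_ord b; lia.
pose o0 : 'I_r := inord 0; pose o1 : 'I_r := inord 1.
have [q q_o0 q_o1] : exists2 q : 'S_r, q o0 = a & q o1 = b.
  pose c := tperm o0 a o1.
  have ne_ca : c != a.
    by rewrite /c -[X in _ != X](tpermL o0 a) (inj_eq perm_inj) -(inj_eq val_inj) /= !inordK.
  exists (tperm o0 a * tperm c b)%g; rewrite permM; last by rewrite -/c tpermL.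
  by rewrite tpermL tpermD // eq_sym.
have pab_q : p a * p b * S (q^-1)%g = S (q^-1)%g * (p 0 * p 1).
  rewrite -mulrA p_mul_cox mulrA p_mul_cox -mulrA -q_o0 -q_o1 !permK.
  by rewrite !inordK.
have -> : tperm a b = (q^-1 * eltr r' 0 * q)%g.
  by rewrite -mulgA -conjgE /eltr lt_1_r tpermJ q_o0 q_o1.
rewrite !S_mul S_eltr // !mulrA pab_q -(mulrA (S _) _ (s 0)) pp_s //.
by rewrite -pab_q -mulrA S_mulV mulr1.
Qed.

Lemma pid_tperm X (a b : 'I_r) : a != b -> a \notin X -> b \notin X ->
  pid X * S (tperm a b) = pid X.
Proof.
move=> ne_ab X'a X'b; have bX'a : a \notin b |: X by rewrite !inE negb_or X'a ne_ab.
rewrite -(pid_setU1 X'b) -(pid_setU1 bX'a) -!mulrA; congr (_ * _).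
by rewrite !mulrA pp_tperm.
Qed.

Lemma pid_cox_fix X q : {in X, q =1 id} -> pid X * S q = pid X.
Proof.
have [k] := ubnP #|[set x | q x != x]|; elim: k q => // k IHk q lt_q_k fix_q.
have [a moved_a|fixed] := pickP (fun a => q a != a); last first.
  suff -> : q = 1%g by rewrite S1 mulr1.
  by apply/permP => x; rewrite perm1; apply/eqP/negbFE/fixed.
have X'a : a \notin X by apply: contra moved_a => /fix_q ->.
have X'qa : q a \notin X by apply: contra moved_a => /fix_q /perm_inj ->.
have -> : q = (q * tperm a (q a) * tperm a (q a))%g by rewrite -mulgA tperm2 mulg1.
rewrite S_mul mulrA IHk; first by rewrite pid_tperm // eq_sym.
  by have := card_moved_mul_tperm moved_a; lia.
move=> x X_x; rewrite permM (fix_q x X_x) tpermD //.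
  by apply: contraNneq X'a => ->.
by apply: contraNneq X'qa => ->.
Qed.

Definition pmodel (m : Defs.pmap r) : A :=
  pid (pdom m) * (if [pick q | m == prestr (pdom m) q] is Some q then S q else 1).

Lemma pmodel_prestr X q : pmodel (prestr X q) = pid X * S q.
Proof.
rewrite /pmodel pdom_prestr.
case: pickP => [q0 /eqP/prestr_inj eq_qq0|/(_ q)]; last by rewrite eqxx.
rewrite -(mulgKV q0 q) S_mul mulrA [in RHS]pid_cox_fix // => x X_x.
by rewrite permM eq_qq0 // permK.
Qed.

Lemma pmodelM m1 m2 : pinj m1 -> pinj m2 ->
  pmodel m1 * pmodel m2 = z ^+ pN m1 m2 *: pmodel (Defs.pcomp m1 m2).
Proof.
move=> /prestr_pdom[q1 ->] /prestr_pdom[q2 ->].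
rewrite pN_prestr pcomp_prestr !pmodel_prestr mulrA -(mulrA (pid _)) cox_mul_pid.
by rewrite mulrA pidM -!scalerAl S_mul mulrA.
Qed.

Definition pmodel_map (x : Pel K r) : A := \sum_(d : pperm r) x d *: pmodel (val d).

Lemma pmodel_map_basis m : pinj m -> pmodel_map (pbasis K m) = pmodel m.
Proof.
move=> inj_m; rewrite /pmodel_map (bigD1 (exist _ m inj_m)) //= big1 ?addr0.
  by rewrite ffunE /= eqxx scale1r.
move=> d ne_d; rewrite ffunE; case: eqP => [eq_d|_]; last by rewrite scale0r.
by case/eqP: ne_d; apply: val_inj.
Qed.

Lemma pmodel_mapM x y : pmodel_map (pmul z x y) = pmodel_map x * pmodel_map y.
Proof.
pose comp (d1 d2 : pperm r) : pperm r := Sub _ (pinj_pcomp (valP d1) (valP d2)).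
transitivity (\sum_(d1 : pperm r) \sum_(d2 : pperm r)
    (x d1 * y d2 * z ^+ pN (val d1) (val d2)) *: pmodel (val (comp d1 d2))).
  rewrite /pmodel_map (eq_bigr (fun d => \sum_(d1 : pperm r) \sum_(d2 : pperm r)
      if comp d1 d2 == d then (x d1 * y d2 * z ^+ pN (val d1) (val d2)) *: pmodel (val d) else 0));
      last first.
    move=> d _; rewrite ffunE scaler_suml; apply: eq_bigr => d1 _.
    by rewrite scaler_suml big_mkcond; apply: eq_bigr => d2 _; case: ifP; rewrite ?scale0r.
  rewrite exchange_big; apply: eq_bigr => d1 _; rewrite exchange_big; apply: eq_bigr => d2 _.
  by rewrite -big_mkcond (big_pred1 (comp d1 d2)) // => d; rewrite /= eq_sym.
rewrite /pmodel_map mulr_suml; apply: eq_bigr => d1 _; rewrite mulr_sumr; apply: eq_bigr => d2 _.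
by rewrite -scalerAl -scalerAr scalerA pmodelM ?(valP d1) ?(valP d2) // scalerA.
Qed.

Lemma pmodel_map_morph : palg_morph z pmodel_map.
Proof.
split=> [a x y|x y|].
- rewrite /pmodel_map scaler_sumr -big_split; apply: eq_bigr => d _.
  by rewrite !ffunE scalerDl scalerA.
- exact: pmodel_mapM.
- by rewrite poneE pmodel_map_basis ?pinj_prestr // pmodel_prestr pidT S1 mulr1.
Qed.

Lemma pmodel_map_sgen i : (i.+1 < r)%N -> pmodel_map (sgen K r i) = s i.
Proof.
move=> lt_i_r; rewrite sgenE // pmodel_map_basis ?pinj_prestr // pmodel_prestr.
by rewrite pidT mul1r S_eltr.
Qed.

Lemma pmodel_map_pgen j : (j < r)%N -> pmodel_map (pgen K r j) = p j.
Proof.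
move=> lt_j_r; rewrite pgenE // pmodel_map_basis ?pinj_prestr // pmodel_prestr.
by rewrite pid_setC1 S1 mulr1 inordK.
Qed.

Lemma palg_universal : exists f : Pel K r -> A,
  [/\ palg_morph z f,
      forall i, (i.+1 < r)%N -> f (sgen K r i) = s i,
      forall j, (j < r)%N -> f (pgen K r j) = p j &
      forall g : Pel K r -> A, palg_morph z g ->
        (forall i, (i.+1 < r)%N -> g (sgen K r i) = s i) ->
        (forall j, (j < r)%N -> g (pgen K r j) = p j) ->
        forall x, g x = f x].
Proof.
exists pmodel_map; split; [exact: pmodel_map_morph | exact: pmodel_map_sgen |
  exact: pmodel_map_pgen | move=> g morph_g g_s g_p].
apply: palg_morph_eq morph_g pmodel_map_morph _ _ => [i|j] lt_r.
  by rewrite g_s ?pmodel_map_sgen.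
by rewrite g_p ?pmodel_map_pgen.
Qed.

End RelationsModel.

Local Open Scope ring_scope.

Theorem theorem8p6 (R : realType) (r : nat) (z : complex R) :
  (1 <= r)%N -> z != 0 ->
  (* the images of the generators satisfy the relations in P'_r(z) ... *)
  pres_rels (pmul z) (pone _ r) (pscale z) r (sgen _ r) (pgen _ r) /\
  (* ... and P'_r(z) with these elements is universal among them *)
  (forall (A : algType (complex R)) (s p : nat -> A),
     pres_rels (fun a b => a * b) 1 (fun a => z *: a) r s p ->
     exists f : Pel (complex R) r -> A,
       [/\ palg_morph z f,
           (forall i, (i.+1 < r)%N -> f (sgen _ r i) = s i),
           (forall j, (j < r)%N -> f (pgen _ r j) = p j) &
           (forall g : Pel (complex R) r -> A, palg_morph z g ->
              (forall i, (i.+1 < r)%N -> g (sgen _ r i) = s i) ->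
              (forall j, (j < r)%N -> g (pgen _ r j) = p j) ->
              forall x, g x = f x)]).
Proof.
case: r => [//|r'] _ _; split; first exact: pres_rels_palg.
move=> A s p [p_idem [p_comm [s_invol [s_braid [s_far_comm [s_pp [s_conj_p s_p_comm]]]]]]].
have pp_s i (lt_i_r : (i.+1 < r'.+1)%N) := (s_pp i lt_i_r).2.
exact: (palg_universal p_idem p_comm s_invol s_braid s_far_comm pp_s s_conj_p s_p_comm).
Qed.
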